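(* Let $p$ be an odd prime, $m\ge1$, $Q=T_{(p^m)}$, $K=K_Q(p)$ and $n\ge1$. An element $M=M_1\otimes M_2\otimes\cdots\otimes M_n\in K^{\otimes n}$ satisfies $M^p=\mathbbm{1}$ if there exists a subset $I\subset\{1,\dots,n\}$ such that: for all $i\notin I$, $M_i=S_{\xi_i}X^{b_i}$ with $b_i\neq0$; and for all $i\in I$, $M_i=S_{\xi_i}\in Q$ with $\vartheta^{(i)}_{j,a}=0$ for all $j\ge2$ and $a\neq0$, and $\sum_{i\in I}\vartheta^{(i)}_{2,0}\equiv0\bmod p$.
   Context: Let $\{|q\rangle:q\in\mathbb{Z}_p\}$ be the computational basis of $\mathbb{C}^p$ and $X|q\rangle=|q+1\rangle$. For $\xi:\mathbb{Z}_p\to U(1)$ let $S_\xi=\mathrm{diag}(\xi(0),\dots,\xi(p-1))$. $T=\{S_\xi:\prod_{q}\xi(q)=1\}$ and $T_{(p^k)}=\{S\in T:S^{p^k}=\mathbbm{1}\}$. $K_Q(p)$ is the subgroup of $SU(p)$ generated by all $S_\xi X^b$ with $S_\xi\in Q$, $b\in\mathbb{Z}_p$; $K^{\otimes n}$ is the group of Kronecker products $M_1\otimes\cdots\otimes M_n$ with $M_i\in K$. Every $S_\xi\in T_{(p^m)}$ has a unique expansion $\xi(q)=\exp\big(\sum_{j=1}^m\frac{2\pi i}{p^j}\sum_{a=0}^{p-1}\vartheta_{j,a}q^a\big)$ with $\vartheta_{j,a}\in\{0,\dots,p-1\}$; $\vartheta^{(i)}_{j,a}$ denote these coefficients for $\xi_i$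 (coefficients with $j>m$ are taken to be $0$). *)

From HB Require Import structures.
From mathcomp Require Import all_boot all_order all_algebra.
From mathcomp Require Import reals trigo.
From mathcomp Require Import complex.
Set Implicit Arguments. Unset Strict Implicit. Unset Printing Implicit Defensive.
Import Order.TTheory GRing.Theory Num.Theory.
Local Open Scope ring_scope.

Section Defs.
Variable R : realType.
Local Notation C := (complex R).

Definition expi (t : R) : C := (cos (2 * pi * t) +i* sin (2 * pi * t))%C.

Variable p : nat.

Definition Smx (xi : 'I_p -> C) : 'M[C]_p := diag_mx (\row_q xi q).

(* X |q> = |q+1> : X_{r,c} = 1 iff r = c + 1 (mod p) *)
Definition Xmx : 'M[C]_p :=
  \matrix_(r < p, c < p) (if (r : nat) == (c.+1 %% p)%N then 1 else 0).

Definition inT (A : 'M[C]_p) : Prop :=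
  exists xi : 'I_p -> C,
    [/\ forall q, `|xi q| = 1, \prod_q xi q = 1 & A = Smx xi].

Definition inTpow (k : nat) (A : 'M[C]_p) : Prop :=
  inT A /\ A ^+ (p ^ k) = 1.

Inductive inK (m : nat) : 'M[C]_p -> Prop :=
  | inK_gen (xi : 'I_p -> C) (b : 'I_p) :
      inTpow m (Smx xi) -> inK m (Smx xi *m Xmx ^+ b)
  | inK_one : inK m 1
  | inK_mul A B : inK m A -> inK m B -> inK m (A * B)
  | inK_inv A : inK m A -> inK m (invmx A).

(* theta is the (unique) expansion of xi in T_(p^m):
   xi(q) = exp( sum_{j=1}^m 2 pi i / p^j * sum_{a=0}^{p-1} theta_{j,a} q^a ),
   with theta_{j,a} in {0,..,p-1}; coefficients outside 1<=j<=m, a<p are 0. *)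
Definition is_expansion (m : nat) (theta : nat -> nat -> nat)
    (xi : 'I_p -> C) : Prop :=
  [/\ forall j a, (theta j a < p)%N,
      forall j a, [|| j == 0%N, (m < j)%N | (p <= a)%N] -> theta j a = 0%N &
      forall q : 'I_p,
        xi q = expi (\sum_(1 <= j < m.+1) \sum_(0 <= a < p)
                       ((theta j a)%:R * ((q : nat) ^ a)%:R / (p ^ j)%:R))].

(* Kronecker product M_1 (x) ... (x) M_n, as a matrix on (C^p)^(x n) whose
   basis |x_1 ... x_n> is indexed by x : {ffun 'I_n -> 'I_p}
   (enumerated in the order of enum). *)
Definition kron (n : nat) (M : 'I_n -> 'M[C]_p)
    : 'M[C]_(#|{ffun 'I_n -> 'I_p}|) :=
  let F := {ffun 'I_n -> 'I_p} in
  \matrix_(r < #|F|, c < #|F|)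
     \prod_(i < n) M i ((enum_val r : F) i) ((enum_val c : F) i).

End Defs.

(* For i outside I, M_i = S_xi X^b with b invertible mod p, so M_i^p is the
   scalar prod_q xi(q) = det M_i, and det M_i = 1 on K because X is the matrix of
   a p-cycle, an even permutation for odd p.  For i in I, the expansion of xi
   gives xi(q)^p = e(p t) with t = sum_(j >= 2) theta_(j,0) / p^j independent of
   q, so prod_q xi(q) = 1 forces e(p^2 t) = 1.  As p^2 t is theta_(2,0) plus a
   p-adic fraction in [0, 1), that fraction vanishes and M_i^p = e(theta_(2,0)/p).
   Hence (M_1 (x) ... (x) M_n)^p is the scalar e(sum_(i in I) theta_(2,0)/p) = 1. *)

From HB Require Import structures.
From mathcomp Require Import all_boot all_order all_algebra.
From mathcomp Require Import reals trigo.
From mathcomp Require Import complex.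
From mathcomp Require Import perm ring lra zify.
Set Implicit Arguments. Unset Strict Implicit. Unset Printing Implicit Defensive.
Import Order.TTheory GRing.Theory Num.Theory.
Local Open Scope ring_scope.

Lemma big_nat_recl_vanish (V : nmodType) (k m : nat) (F : nat -> V) :
  ((m < k)%N -> F k = 0) ->
  \sum_(k <= j < m.+1) F j = F k + \sum_(k.+1 <= j < m.+1) F j.
Proof.
move=> Fk0; have [mk|km] := ltnP m k; last by rewrite big_ltn.
by rewrite Fk0 // !big_geq ?add0r // ltnW.
Qed.

Section Digits.
Variable F : realFieldType.
Variables (k : nat) (d : nat -> nat).
Hypotheses (k_gt0 : (0 < k)%N) (d_lt : forall j, (d j < k)%N).

Let kr : F := k%:R.

Lemma digit_sum_le (a b : nat) : (a <= b)%N ->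
  \sum_(a <= j < b) (d j)%:R / kr ^+ j <= kr / kr ^+ a - kr / kr ^+ b.
Proof.
have kr0 : kr != 0 by rewrite pnatr_eq0 -lt0n.
elim: b => [|b IH]; first by rewrite leqn0 => /eqP ->; rewrite big_geq ?subrr.
rewrite leq_eqVlt => /orP[/eqP ->|ab]; first by rewrite big_geq ?subrr.
have dk : (d b)%:R / kr ^+ b <= (kr - 1) / kr ^+ b.
  by rewrite ler_pM2r ?invr_gt0 ?exprn_gt0 ?ltr0n // lerBrDr natr1 ler_nat.
rewrite big_nat_recr //=; apply: le_trans (lerD (IH ab) dk) _.
rewrite exprS le_eqVlt; apply/predU1l.
by field; apply/and3P; split; rewrite ?expf_neq0.
Qed.

Lemma digit_sum_lt (a b : nat) :
  \sum_(a <= j < b) (d j)%:R / kr ^+ j < kr / kr ^+ a.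
Proof.
have bound_gt0 c : 0 < kr / kr ^+ c by rewrite divr_gt0 ?exprn_gt0 ?ltr0n.
have [ab|ba] := leqP a b; last by rewrite big_geq ?bound_gt0 // ltnW.
by apply: le_lt_trans (digit_sum_le ab) _; rewrite gtrBl bound_gt0.
Qed.
End Digits.

Section Expi.
Variable R : realType.

Lemma expiD (x y : R) : expi (x + y) = expi x * expi y.
Proof.
rewrite /expi mulrDr cosD sinD; apply/eqP; rewrite eq_complex /=.
by rewrite !eqxx /= addrC (mulrC (sin _)).
Qed.

Lemma expi0 : expi (0 : R) = 1.
Proof. by rewrite /expi mulr0 cos0 sin0. Qed.

Lemma expi_nat (k : nat) : expi (k%:R : R) = 1.
Proof.
elim: k => [|k IH]; first exact: expi0.
rewrite -natr1 expiD IH mul1r /expi mulr1 mulr_natl.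
by rewrite cos2pi sin2pi.
Qed.

Lemma expiX (x : R) k : expi x ^+ k = expi (k%:R * x).
Proof.
elim: k => [|k IH]; first by rewrite mul0r expi0.
by rewrite exprS IH -expiD -natr1 mulrDl mul1r addrC.
Qed.

Lemma expi_sum (I : Type) (s : seq I) (P : pred I) (F : I -> R) :
  expi (\sum_(i <- s | P i) F i) = \prod_(i <- s | P i) expi (F i).
Proof. exact: (big_morph _ expiD expi0). Qed.

Lemma expi_dvdn (a k : nat) : (k %| a)%N -> expi (a%:R / k%:R : R) = 1.
Proof.
case/dvdnP => q ->; have [->|k_neq0] := eqVneq k 0%N.
  by rewrite invr0 mulr0 expi0.
by rewrite natrM mulfK ?pnatr_eq0 ?expi_nat.
Qed.

Lemma expiX_frac (a k : nat) (t : R) : (0 < k)%N ->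
  expi (a%:R / k%:R + t) ^+ k = expi (k%:R * t).
Proof.
move=> k_gt0; rewrite expiX mulrDr mulrC divfK ?pnatr_eq0 -?lt0n //.
by rewrite expiD expi_nat mul1r.
Qed.

Lemma expi_eq1_itv (u : R) : 0 <= u < 1 -> expi u = 1 -> u = 0.
Proof.
move=> /andP[u_ge0 u_lt1] /eqP; rewrite /expi eq_complex /= => /andP[/eqP cos1 _].
have sin0 : sin (pi * u) = 0.
  have : cos (pi * u *+ 2) = 1 by rewrite -cos1 -mulrA mulr_natl.
  rewrite cos_mulr2n cos2sin2 mulr2n => cos2_eq1.
  have /eqP : sin (pi * u) ^+ 2 = 0 by lra.
  by rewrite expf_eq0 /= => /eqP.
apply/eqP; rewrite eq_le u_ge0 andbT; apply: contraT; rewrite -ltNge => u_gt0.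
have : 0 < sin (pi * u) by apply: sin_gt0_pi; rewrite mulr_gt0 ?pi_gt0 //= gtr_pMr ?pi_gt0.
by rewrite sin0 ltxx.
Qed.

End Expi.

Section Expansion.
Variable R : realType.
Variables (p m : nat) (th : nat -> nat -> nat) (xi : 'I_p -> complex R).
Hypotheses (p_gt0 : (0 < p)%N) (xi_exp : is_expansion m th xi).
Hypothesis th_const : forall j a, (2 <= j)%N -> a != 0%N -> th j a = 0%N.

Let pr : R := p%:R.

Definition expansion_tail (k : nat) : R :=
  \sum_(k <= j < m.+1) (th j 0%N)%:R / pr ^+ j.

Lemma expansion_tail_recl k : (2 <= k)%N ->
  expansion_tail k = (th k 0%N)%:R / pr ^+ k + expansion_tail k.+1.
Proof.
case: xi_exp => _ th_out _ k_ge2; rewrite /expansion_tail big_nat_recl_vanish //.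
by move=> mk; rewrite th_out ?mul0r // mk orbT.
Qed.

Lemma expansionE (q : 'I_p) :
  xi q = expi ((\sum_(a < p) th 1%N a * q ^ a)%N%:R / pr + expansion_tail 2).
Proof.
case: xi_exp => _ th_out ->; congr expi.
rewrite big_nat_recl_vanish => [|m0]; last first.
  by rewrite big1_seq // => a _; rewrite th_out ?mul0r // m0 orbT.
rewrite expn1 -mulr_suml big_mkord natr_sum.
under [in RHS]eq_bigr => a _ do rewrite natrM.
congr (_ / _ + _); apply: eq_big_nat => j /andP[j_ge2 _].
rewrite big_ltn // big_nat big1 ?addr0 => [|a /andP[a_gt0 _]].
  by rewrite expn0 mulr1 natrX.
by rewrite th_const -?lt0n ?mul0r.
Qed.

Lemma expansion_expn (q : 'I_p) : xi q ^+ p = expi (pr * expansion_tail 2).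
Proof. by rewrite expansionE expiX_frac. Qed.

Lemma prod_expansion_expn : (\prod_q xi q) ^+ p = expi (pr * (pr * expansion_tail 2)).
Proof.
rewrite -prodrXl (eq_bigr _ (fun q _ => expansion_expn q)).
by rewrite prodr_const card_ord expiX.
Qed.

Lemma expansion_tail3_eq0 : \prod_q xi q = 1 -> expansion_tail 3 = 0.
Proof.
move=> prod_xi; have [th_lt _ _] := xi_exp.
have pr_gt0 : 0 < pr by rewrite ltr0n.
have pr_neq0 : pr != 0 by rewrite gt_eqF.
have := prod_expansion_expn; rewrite prod_xi expr1n expansion_tail_recl //.
set t3 := expansion_tail 3.
have -> : pr * (pr * ((th 2%N 0%N)%:R / pr ^+ 2 + t3)) = (th 2%N 0%N)%:R + pr * (pr * t3).
  by field.
rewrite expiD expi_nat mul1r => /esym /expi_eq1_itv scaled_t3_eq0.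
have t3_ge0 : 0 <= t3 by apply: sumr_ge0 => j _; rewrite divr_ge0 ?ler0n ?exprn_ge0 // ltW.
have t3_lt : t3 < pr / pr ^+ 3 := digit_sum_lt R p_gt0 (th_lt^~ 0%N) 3 m.+1.
have scaled_t3_lt1 : pr * (pr * t3) < 1.
  rewrite -[X in _ < X](_ : pr * (pr * (pr / pr ^+ 3)) = 1) ?ltr_pM2l //.
  by field.
have /eqP : pr * (pr * t3) = 0.
  by apply: scaled_t3_eq0; rewrite scaled_t3_lt1 andbT !mulr_ge0 // ltW.
by rewrite !mulf_eq0 (negPf pr_neq0) => /eqP.
Qed.

Lemma expansion_expn_prod1 (q : 'I_p) : \prod_q xi q = 1 ->
  xi q ^+ p = expi ((th 2%N 0%N)%:R / pr).
Proof.
move=> prod_xi; have pr0 : pr != 0 by rewrite pnatr_eq0 -lt0n.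
rewrite expansion_expn expansion_tail_recl // expansion_tail3_eq0 // addr0.
by congr expi; field.
Qed.

End Expansion.

Lemma detX (F : comPzRingType) n (A : 'M[F]_n) k : \det (A ^+ k) = \det A ^+ k.
Proof.
elim: k => [|k IH]; first by rewrite !expr0 det1.
by rewrite !exprS -mulmxE det_mulmx IH.
Qed.

Section ClockShift.
Variable R : realType.
Local Notation C := (complex R).
Variable p' : nat.
Local Notation p := p'.+2.
Local Notation X := (@Xmx R p).

Lemma SmxE (xi : 'I_p -> C) q : Smx xi q q = xi q.
Proof. by rewrite !mxE eqxx mulr1n. Qed.

Lemma SmxX (xi : 'I_p -> C) k : Smx xi ^+ k = Smx (fun q => xi q ^+ k).
Proof.
elim: k => [|k IH]; first by apply/matrixP => r c; rewrite !mxE.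
by rewrite exprSr IH -mulmxE mulmx_diag; congr diag_mx; apply/rowP => q; rewrite !mxE exprSr.
Qed.

Lemma eq_Smx (xi xi' : 'I_p -> C) : xi =1 xi' -> Smx xi = Smx xi'.
Proof. by move=> eq_xi; congr diag_mx; apply/rowP => q; rewrite !mxE eq_xi. Qed.

Lemma Smx_const (a : C) : Smx (fun _ : 'I_p => a) = a%:M.
Proof. by rewrite -diag_const_mx; congr diag_mx; apply/rowP => q; rewrite !mxE. Qed.

Lemma det_Smx (xi : 'I_p -> C) : \det (Smx xi) = \prod_q xi q.
Proof. by rewrite det_diag; under eq_bigr do rewrite mxE. Qed.

Lemma inT_prod (xi : 'I_p -> C) : inT (Smx xi) -> \prod_q xi q = 1.
Proof.
case=> xi' [_ prod_xi' Sxi]; rewrite -[RHS]prod_xi'; apply: eq_bigr => q _.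
by rewrite -SmxE Sxi SmxE.
Qed.

Lemma XmxE (r c : 'I_p) : X r c = (r == c + 1)%:R.
Proof.
rewrite mxE -val_eqE /= modnDmr addn1.
by case: eqP.
Qed.

Lemma XmxX k : X ^+ k = \matrix_(r, c) (r == c + k%:R)%:R.
Proof.
elim: k => [|k IH]; first by apply/matrixP => r c; rewrite !mxE addr0 eq_sym.
rewrite exprSr IH; apply/matrixP => r c; rewrite !mxE.
under eq_bigr => j _ do rewrite XmxE mxE.
rewrite (bigD1 (c + 1)) //= big1 ?addr0 => [|j /negPf ->]; last by rewrite mulr0.
by rewrite eqxx mulr1 -addrA (addrC 1) -natr1.
Qed.

Lemma Zp_nat_char : (p%:R : 'I_p) = 0.
Proof. by apply/val_inj; rewrite /= Zp_nat /= modnDm add1n modnn. Qed.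

Lemma Xmx_expp : X ^+ p = 1.
Proof. by apply/matrixP => r c; rewrite XmxX !mxE Zp_nat_char addr0 eq_sym. Qed.

Lemma det_Xmx : odd p -> \det X = 1.
Proof.
move=> p_odd; have shift_inj : injective (fun r : 'I_p => r - 1) by move=> x y /addIr.
have X_perm : X = perm_mx (perm shift_inj).
  by apply/matrixP => r c; rewrite XmxE !mxE permE subr_eq.
have := congr1 determinant Xmx_expp; rewrite X_perm detX det1 det_perm.
by case: odd_perm; rewrite //= !expr1 -signr_odd p_odd expr1.
Qed.

Lemma SmxXmxX (xi : 'I_p -> C) (b : 'I_p) k : (Smx xi *m X ^+ b) ^+ k =
  \matrix_(r, c) ((r == c + k%:R * b)%:R * \prod_(i < k) xi (r - i%:R * b)).
Proof.
elim: k => [|k IH].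
  by apply/matrixP => r c; rewrite !mxE big_ord0 mul0r addr0 eq_sym mulr1.
rewrite exprSr IH; apply/matrixP => r c; rewrite -mulmxE !mxE.
under eq_bigr => j _ do rewrite mxE mul_diag_mx XmxX !mxE natr_Zp.
rewrite (bigD1 (c + b)) //= [X in _ + X]big1 ?addr0 => [|j /negPf ->]; last by rewrite !mulr0.
rewrite eqxx mulr1 big_ord_recr /=.
have -> : c + b + k%:R * b = c + k.+1%:R * b.
  by rewrite -natr1 mulrDl mul1r addrA addrAC.
have [->|_] := eqVneq r (c + k.+1%:R * b); last by rewrite !mul0r.
by rewrite !mul1r -natr1 mulrDl mul1r addrA addrAC addrK.
Qed.

Lemma SmxXmx_expp (xi : 'I_p -> C) (b : 'I_p) : prime p -> (b : nat) != 0%N ->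
  (Smx xi *m X ^+ b) ^+ p = (\prod_q xi q)%:M.
Proof.
move=> p_prime b_neq0.
have b_unit : b \is a GRing.unit.
  have : ((b : nat)%:R : 'Z_p) \is a GRing.unit.
    by rewrite unitZpE // prime_coprime // gtnNdvd // lt0n.
  by rewrite natr_Zp.
rewrite SmxXmxX; apply/matrixP => r c; rewrite !mxE Zp_nat_char mul0r addr0 eq_sym.
have [<-|_] := eqVneq c r; last by rewrite mul0r mulr0n.
have shift_inj : injective (fun i : 'I_p => c - i * b).
  by move=> i j /addrI /oppr_inj /(mulIr b_unit).
rewrite mul1r mulr1n [RHS](reindex_inj shift_inj).
by apply: eq_bigr => i _; rewrite natr_Zp.
Qed.

Lemma det_SmxXmxX (xi : 'I_p -> C) (b : 'I_p) : odd p ->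
  \det (Smx xi *m X ^+ b) = \prod_q xi q.
Proof. by move=> p_odd; rewrite det_mulmx detX det_Xmx // expr1n mulr1 det_Smx. Qed.

Lemma det_inK m (A : 'M[C]_p) : odd p -> inK m A -> \det A = 1.
Proof.
move=> p_odd; elim=> {A} [xi b [/inT_prod prod_xi _]| |A B _ detA _ detB|A _ detA].
- by rewrite det_SmxXmxX.
- exact: det1.
- by rewrite det_mulmx detA detB mulr1.
- by rewrite det_inv detA invr1.
Qed.

End ClockShift.

Section Kronecker.
Variable R : realType.
Local Notation C := (complex R).
Variables p n : nat.

Lemma eq_kron (A B : 'I_n -> 'M[C]_p) : A =1 B -> kron A = kron B.
Proof. by move=> eqAB; apply/matrixP => r c; rewrite !mxE; under eq_bigr do rewrite eqAB. Qed.

Lemma kronM (A B : 'I_n -> 'M[C]_p) :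
  kron (fun i => A i *m B i) = kron A *m kron B.
Proof.
apply/matrixP => r c; rewrite !mxE.
under eq_bigr => i _ do rewrite mxE.
under [RHS]eq_bigr => k _ do rewrite !mxE -big_split /=.
by rewrite bigA_distr_bigA /= big_enum_val.
Qed.

Lemma kron_scalar_mx (a : 'I_n -> C) :
  kron (fun i => (a i)%:M : 'M[C]_p) = (\prod_i a i)%:M.
Proof.
apply/matrixP => r c; rewrite !mxE.
have [->|r_neq_c] := eqVneq r c.
  by rewrite mulr1n; apply: eq_bigr => i _; rewrite mxE eqxx mulr1n.
have [i ri_neq_ci] : exists i, enum_val r i != enum_val c i.
  apply/existsP; apply: contraNT r_neq_c => /existsPn same.
  by apply/eqP/enum_val_inj/ffunP => i; apply/eqP/negPn/same.
by rewrite (bigD1 i) //= mxE (negPf ri_neq_ci) /= !mulr0n mul0r.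
Qed.

Lemma kronX (A : 'I_n -> 'M[C]_p) k : kron A ^+ k = kron (fun i => A i ^+ k).
Proof.
elim: k => [|k IH].
  rewrite expr0 (eq_kron (B := fun=> 1%:M)) => [|i]; last by rewrite expr0.
  by rewrite kron_scalar_mx prodr_const expr1n.
by rewrite exprSr IH -mulmxE -kronM; apply: eq_kron => i; rewrite exprSr.
Qed.

End Kronecker.

Theorem lemma4 (R : realType) (p m n : nat)
    (p_prime : prime p) (p_odd : odd p) (m_ge1 : (1 <= m)%N) (n_ge1 : (1 <= n)%N)
    (M : 'I_n -> 'M[complex R]_p)
    (MK : forall i, inK m (M i))
    (xi : 'I_n -> 'I_p -> complex R) (b : 'I_n -> 'I_p)
    (theta : 'I_n -> nat -> nat -> nat)
    (I : {set 'I_n})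
    (HnotI : forall i, i \notin I ->
        M i = Smx (xi i) *m @Xmx R p ^+ b i /\ (b i : nat) != 0%N)
    (HI : forall i, i \in I ->
        [/\ M i = Smx (xi i), inTpow m (Smx (xi i)),
            is_expansion m (theta i) (xi i) &
            forall j a, (2 <= j)%N -> a != 0%N -> theta i j a = 0%N])
    (Hsum : ((\sum_(i in I) theta i 2%N 0%N) %% p)%N = 0%N) :
  kron M ^+ p = 1.
Proof.
have [p' p_eq] : exists p', p = p'.+2 by exists p.-2; have := prime_gt1 p_prime; lia.
subst p.
pose c i : complex R := if i \in I then expi ((theta i 2%N 0%N)%:R / p'.+2%:R) else 1.
have M_expp i : M i ^+ p'.+2 = (c i)%:M.
  rewrite /c; case: ifPn => [iI|iNI].
    have [-> [/inT_prod prod_xi _] xi_exp theta_const] := HI i iI.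
    rewrite SmxX -Smx_const; apply: eq_Smx => q.
    exact: expansion_expn_prod1 xi_exp theta_const q prod_xi.
  have [M_i b_neq0] := HnotI i iNI.
  have := det_inK p_odd (MK i); rewrite M_i det_SmxXmxX // => prod_xi.
  by rewrite SmxXmx_expp // prod_xi.
rewrite kronX (eq_kron M_expp) kron_scalar_mx -big_mkcond /=.
by rewrite -expi_sum -mulr_suml -natr_sum expi_dvdn //; apply/eqP.
Qed.
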